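(* Let $v\in\Sigma^*$, let $u$ be a $v$-minimal word and $i\in\mathrm{supp}(u)$. Then: (1) every element $g\in\mathcal{I}_i$ is $u$-representable (i.e. some word $u$-represents $g$); (2) if $w$ is a word that $u$-represents some $g\in\mathcal{I}_i\setminus\{0_i\}$, then $\mathrm{rk}(w)=\mathrm{Rnk}(\mathcal{I}_i)$; (3) if $x\in\Sigma^*$ satisfies $\theta_i(x)=0_i$ for some $i\in\mathrm{supp}(u)$, then $\theta_j(x)=0_j$ for all $j\in\mathrm{supp}(u)$.
   Context: Let $\mathcal{A}=\langle Q,\Sigma,\delta\rangle$ be a synchronizing automaton with $n$ states $q_1,\dots,q_n$; write $q\cdot u$ for the action of $u\in\Sigma^*$ and $\mathrm{rk}(u)=|Q\cdot u|$. Each word acts linearly on $\mathbb{C}Q$ by $q\mapsto q\cdot u$, preserving $w^\perp=\{x:\langle x,q_1+\dots+q_n\rangle=0\}$; let $\rho:\Sigma^*\to\mathbb{M}_{n-1}(\mathbb{C})$ be the induced representation, $\mathcal{R}$ the $\mathbb{C}$-algebra generated by $\rho(\Sigma^* )$, $\mathrm{Rad}(\mathcal{A})=\rho^{-1}(\mathrm{Rad}(\mathcal{R}))$. Write $\mathcal{R}/\mathrm{Rad}(\mathcal{R})\cong\prod_{i=1}^k\mathbb{M}_{n_i}(\mathbb{C})$ and let $\theta_i:\Sigma^*\to\mathbb{M}_{n_i}(\mathbb{C})$ be $\rho$ followed by the quotient map and the $i$-th projection; $0_i$ is the zero matrix. The monoid $\theta_i(\Sigma^* )$ has a unique $0$-minimal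 ideal $\mathcal{I}_i$; for $g\in\mathcal{I}_i\setminus\{0_i\}$ let $\mathrm{Rnk}_i(g)=\min\{\mathrm{rk}(u):\theta_i(u)=g\}$ and $\mathrm{Rnk}(\mathcal{I}_i)=\min\{\mathrm{Rnk}_i(g):g\in\mathcal{I}_i\setminus\{0_i\}\}$. The support of a word $z$ is $\mathrm{supp}(z)=\{i:\theta_i(z)\neq0_i\}$. For $v\in\Sigma^*$, a word $u\in\Sigma^*v\Sigma^*$ is $v$-minimal if $\mathrm{supp}(u)\neq\emptyset$ and there is no $z\in\Sigma^*v\Sigma^*$ with $\emptyset\neq\mathrm{supp}(z)\subsetneq\mathrm{supp}(u)$. For such $u$, $i\in\mathrm{supp}(u)$ and $g\in\mathcal{I}_i$, a word $w$ $u$-represents $g$ if $w\in\Sigma^*u\Sigma^*$, $\theta_i(w)=g$, and either $g=0_i$ or $\mathrm{rk}(w)$ is minimum among all words $w'\in\Sigma^*u\Sigma^*$ with $\theta_i(w')=g$. *)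

From mathcomp Require Import all_boot all_order all_algebra.
From mathcomp Require Import reals complex.
Set Implicit Arguments. Unset Strict Implicit. Unset Printing Implicit Defensive.
Import GRing.Theory Num.Theory.
Local Open Scope ring_scope.

(* States: Q = 'I_n.+1 (the paper's n is our n.+1); letters: Sigma : finType;
   transition function delta a q = q . a.  Words are seq Sigma. *)

Section Automaton.
Variables (Sigma : finType) (n : nat) (delta : Sigma -> 'I_n.+1 -> 'I_n.+1).

Definition act (q : 'I_n.+1) (u : seq Sigma) : 'I_n.+1 :=
  foldl (fun p a => delta a p) q u.

Definition rk (u : seq Sigma) : nat := #|[set act q u | q : 'I_n.+1]|.

Definition synchronizing : Prop := exists u, rk u = 1%N.

(* The states q_1..q_n (paper) as 'I_n.+1; the last state is ord_max. *)
Definition st (j : 'I_n) : 'I_n.+1 := widen_ord (leqnSn n) j.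

(* rho(u) : matrix (acting on row vectors) of the map x |-> x . u restricted to
   w^perp = {x | sum_q x_q = 0}, in the basis b_j = q_j - q_{last} (j < n).
   Indeed b_j . u = q_{j.u} - q_{last.u}, whose b_l-coordinate is
   [j.u = l] - [last.u = l]. *)
Definition rho (C : nzRingType) (u : seq Sigma) : 'M[C]_n :=
  \matrix_(j, l) (((act (st j) u == st l)%:R : C) - (act ord_max u == st l)%:R).

End Automaton.

Section Algebra.
Variables (C : fieldType) (n : nat).

Definition gen_alg (S : 'M[C]_n -> Prop) (A : 'M[C]_n) : Prop :=
  exists s : seq (C * seq 'M[C]_n),
    (forall p, p \in s -> forall M, M \in p.2 -> S M) /\
    A = \sum_(p <- s) p.1 *: \big[mulmx/1%:M]_(M <- p.2) M.

Definition rad (Alg : 'M[C]_n -> Prop) (a : 'M[C]_n) : Prop :=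
  Alg a /\ forall b, Alg b -> exists c, Alg c /\
     c *m (1%:M - b *m a) = 1%:M /\ (1%:M - b *m a) *m c = 1%:M.

(* phi = (phi_i)_{i<k} induces an isomorphism of C-algebras
   Alg / rad Alg ~= prod_{i<k} M_{d i}(C):
   each phi_i is a unital algebra morphism on Alg, the joint map is onto the
   product, and its kernel (on Alg) is exactly rad Alg. *)
Definition wedderburn_decomp (Alg : 'M[C]_n -> Prop) (k : nat) (d : 'I_k -> nat)
  (phi : forall i : 'I_k, 'M[C]_n -> 'M[C]_(d i)) : Prop :=
  [/\ (forall i, 0 < d i)%N,
      (forall i c a b, Alg a -> Alg b -> phi i (c *: a + b) = c *: phi i a + phi i b),
      (forall i a b, Alg a -> Alg b -> phi i (a *m b) = phi i a *m phi i b)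
        /\ (forall i, phi i 1%:M = 1%:M),
      (forall g : forall i, 'M[C]_(d i), exists a, Alg a /\ forall i, phi i a = g i)
    & (forall a, Alg a -> ((forall i, phi i a = 0) <-> rad Alg a))].

End Algebra.

Section Monoid.
Variables (Sigma : finType) (C : fieldType) (m : nat) (T : seq Sigma -> 'M[C]_m).

Definition is_ideal (I : 'M[C]_m -> Prop) : Prop :=
  [/\ exists g, I g,
      (forall g, I g -> exists u, T u = g)
    & (forall x y g, I g -> I (T x *m g *m T y))].

Definition zero_minimal_ideal (I : 'M[C]_m -> Prop) : Prop :=
  [/\ is_ideal I,
      exists g, I g /\ g != 0
    & forall J, is_ideal J -> (forall g, J g -> I g) ->
        (forall g, J g <-> g = 0) \/ (forall g, J g <-> I g)].

End Monoid.

Definition is_min (P : nat -> Prop) (r : nat) : Prop :=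
  P r /\ forall r', P r' -> (r <= r')%N.

Section Rank.
Variables (Sigma : finType) (n : nat) (delta : Sigma -> 'I_n.+1 -> 'I_n.+1).
Variables (C : fieldType) (m : nat) (T : seq Sigma -> 'M[C]_m).

Definition Rnk_elt (g : 'M[C]_m) (r : nat) : Prop :=
  is_min (fun r' => exists u, T u = g /\ rk delta u = r') r.

Definition Rnk_ideal (I : 'M[C]_m -> Prop) (r : nat) : Prop :=
  is_min (fun r' => exists g, [/\ I g, g != 0 & Rnk_elt g r']) r.

End Rank.

Section Support.
Variables (Sigma : finType) (n : nat) (delta : Sigma -> 'I_n.+1 -> 'I_n.+1).
Variables (C : fieldType) (k : nat) (d : 'I_k -> nat).
Variable theta : forall i : 'I_k, seq Sigma -> 'M[C]_(d i).

Definition supp (z : seq Sigma) : {set 'I_k} := [set i | theta i z != 0].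

Definition in_two_sided (v u : seq Sigma) : Prop := exists x y, u = x ++ v ++ y.

Definition v_minimal (v u : seq Sigma) : Prop :=
  [/\ in_two_sided v u, supp u != set0
    & ~ exists z, [/\ in_two_sided v z, supp z != set0 & supp z \proper supp u]].

Definition u_represents (u : seq Sigma) (i : 'I_k) (g : 'M[C]_(d i)) (w : seq Sigma) : Prop :=
  [/\ in_two_sided u w, theta i w = g
    & g = 0 \/ forall w', in_two_sided u w' -> theta i w' = g -> (rk delta w <= rk delta w')%N].

End Support.

(** The image of each [theta_i] spans the full matrix algebra [M_{n_i}(C)], which is a
    prime algebra: for nonzero [A], [B] some word [z] has [A theta_i(z) B <> 0].
    (1), (2): given [theta_i(y) <> 0] in the 0-minimal ideal [I_i] and [theta_i(u) <> 0],
    primeness twice yields [z], [z'] with [h = theta_i(y z u z' y) <> 0]; as [h] lies in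
    [I_i], it generates [I_i], so every [g] of [I_i] is the image of a word
    [x y z u z' y x'], which contains [u] and has rank at most [rk(y)].  Hence the least
    rank of a word containing [u] and mapped to a nonzero [g] is [Rnk(I_i)]; the zero
    of [I_i] is the image of [u r] for a reset word [r].
    (3): if [theta_i(x) = 0] but [theta_j(x) <> 0] for [i, j] in [supp(u)], primeness
    gives [y] with [theta_j(u y x) <> 0]; then [supp(u y x)] is a nonempty proper subset
    of [supp(u)], against the [v]-minimality of [u]. *)
From mathcomp Require Import all_boot all_order all_algebra.
From mathcomp Require Import reals complex.
From Stdlib Require Import Classical.
Set Implicit Arguments. Unset Strict Implicit. Unset Printing Implicit Defensive.
Import GRing.Theory Num.Theory.
Local Open Scope ring_scope.

Lemma ex_is_min (P : nat -> Prop) : (exists r, P r) -> exists r, is_min P r.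
Proof.
move=> [r0 Pr0]; elim/ltn_ind: r0 Pr0 => r IH Pr.
have [[r' [lt_r'r Pr']] | no_smaller] := classic (exists r', (r' < r)%N /\ P r').
  exact: IH lt_r'r Pr'.
exists r; split=> // r' Pr'; rewrite leqNgt; apply/negP => lt_r'r.
by apply: no_smaller; exists r'.
Qed.

Section Automaton.
Variables (Sigma : finType) (n : nat) (delta : Sigma -> 'I_n.+1 -> 'I_n.+1).

Lemma act_cat q u v : act delta q (u ++ v) = act delta (act delta q u) v.
Proof. by rewrite /act foldl_cat. Qed.

Lemma rk_infix x u y : (rk delta (x ++ u ++ y) <= rk delta u)%N.
Proof.
rewrite /rk.
have -> : [set act delta q (x ++ u ++ y) | q : 'I_n.+1] =
          [set act delta p y | p in [set act delta q (x ++ u) | q : 'I_n.+1]].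
  by rewrite -imset_comp; apply: eq_imset => q /=; rewrite catA act_cat.
apply: leq_trans (leq_imset_card _ _) _; apply: subset_leq_card.
by apply/subsetP => _ /imsetP [q _ ->]; rewrite act_cat imset_f.
Qed.

Variable C : nzRingType.

Lemma rho_cat u v : rho delta C (u ++ v) = rho delta C u *m rho delta C v.
Proof.
apply/matrixP => j l; rewrite !mxE.
set F := fun s => ((act delta s v == st l)%:R : C) - (act delta ord_max v == st l)%:R.
have coord_sum p : \sum_(m < n) ((p == st m)%:R : C) * F (st m) = F p.
  transitivity (\sum_(s < n.+1) ((p == s)%:R : C) * F s).
    (* the coordinate of the last state is dropped in [rho], but [F ord_max = 0] *)
    by rewrite big_ord_recr /= /F subrr mulr0 addr0.
  rewrite (bigD1 p) //= eqxx mul1r big1 ?addr0 // => s /negPf.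
  by rewrite eq_sym => ->; rewrite mul0r.
under eq_bigr => m _ do rewrite !mxE mulrBl.
by rewrite sumrB !coord_sum /F !act_cat opprB addrA subrK.
Qed.

Lemma rho_nil : rho delta C [::] = 1%:M.
Proof.
apply/matrixP => j l; rewrite !mxE /act /=.
have -> : (st j == st l) = (j == l) by rewrite -val_eqE.
have -> : (@ord_max n == st l) = false by rewrite -val_eqE /= gtn_eqF.
by rewrite subr0.
Qed.

Lemma rho_rk1 r : rk delta r = 1%N -> rho delta C r = 0.
Proof.
move=> /eqP /cards1P [p rE].
have act_r q : act delta q r = p by apply/set1P; rewrite -rE imset_f.
by apply/matrixP => j l; rewrite !mxE !act_r subrr.
Qed.

Lemma rho_prod (L : seq 'M[C]_n) :
  (forall M, M \in L -> exists u, M = rho delta C u) ->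
  exists w, \big[mulmx/1%:M]_(M <- L) M = rho delta C w.
Proof.
elim: L => [|M L IH] L_rho; first by exists [::]; rewrite big_nil rho_nil.
have [u ->] := L_rho M (mem_head _ _).
have [w Lw] := IH (fun N LN => L_rho N (@mem_behead _ (M :: L) _ LN)).
by exists (u ++ w); rewrite big_cons Lw rho_cat.
Qed.

End Automaton.

Section PrimeMatrixAlgebra.
Variables (F : fieldType) (m : nat).

Lemma matrix_nz_entry p (A : 'M[F]_(m, p)) : A != 0 -> exists i j, A i j != 0.
Proof.
move=> nzA; have /existsP [i /existsP [j nzAij]] : [exists i, exists j, A i j != 0].
  apply: contraR nzA => /existsPn A0; apply/eqP/matrixP => i j; rewrite mxE.
  by move/existsPn: (A0 i) => /(_ j) /negbNE /eqP.
by exists i, j.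
Qed.

Lemma mulmx_prime (A B : 'M[F]_m) : A != 0 -> B != 0 -> exists M, A *m M *m B != 0.
Proof.
move=> /matrix_nz_entry [i0 [j0 nzA]] /matrix_nz_entry [i1 [j1 nzB]].
exists (delta_mx j0 i1).
rewrite -(mul_delta_mx (0 : 'I_1)) mulmxA -colE -mulmxA -rowE.
apply/eqP => /matrixP /(_ i0 j1); rewrite !mxE big_ord1 !mxE.
by move/eqP; rewrite mulf_eq0 (negPf nzA) (negPf nzB).
Qed.

Lemma spanning_mulmx_prime (Sigma : finType) (T : seq Sigma -> 'M[F]_m) :
  (forall M, exists s : seq (F * seq Sigma), M = \sum_(p <- s) p.1 *: T p.2) ->
  forall A B : 'M[F]_m, A != 0 -> B != 0 -> exists z, A *m T z *m B != 0.
Proof.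
move=> T_span A B nzA nzB; have [M nzAMB] := mulmx_prime nzA nzB.
apply: NNPP => AT0B; move/negP: nzAMB; apply; apply/eqP.
have [s ->] := T_span M.
rewrite mulmx_sumr mulmx_suml big1_seq // => p _.
rewrite -scalemxAr -scalemxAl.
suff -> : A *m T p.2 *m B = 0 by rewrite scaler0.
by case: (eqVneq (A *m T p.2 *m B) 0) => // nz; case: AT0B; exists p.2.
Qed.

End PrimeMatrixAlgebra.

Section ZeroMinimalIdeal.
Variables (Sigma : finType) (n : nat) (delta : Sigma -> 'I_n.+1 -> 'I_n.+1).
Variables (F : fieldType) (m : nat) (T : seq Sigma -> 'M[F]_m).
Hypothesis T_cat : forall x y, T (x ++ y) = T x *m T y.
Hypothesis T_nil : T [::] = 1%:M.
Hypothesis T_span :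
  forall M, exists s : seq (F * seq Sigma), M = \sum_(p <- s) p.1 *: T p.2.
Variable I : 'M[F]_m -> Prop.
Hypothesis I_zmin : zero_minimal_ideal T I.

Lemma zero_minimal_ideal_generated h : I h -> h != 0 ->
  forall g, I g -> exists x y, g = T x *m h *m T y.
Proof.
move=> Ih nzh; case: I_zmin => [[_ I_img I_closed] _ I_min].
pose J M := exists x y, M = T x *m h *m T y.
have Jh : J h by exists [::], [::]; rewrite T_nil mul1mx mulmx1.
have J_ideal : is_ideal T J.
  split; first by exists h.
    have [w Tw] := I_img h Ih.
    by move=> _ [x [y ->]]; exists (x ++ w ++ y); rewrite !T_cat Tw mulmxA.
  by move=> a b _ [x [y ->]]; exists (a ++ x), (y ++ b); rewrite !T_cat !mulmxA.
have JI M : J M -> I M by move=> [x [y ->]]; apply: I_closed.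
case: (I_min J J_ideal JI) => [J0 | JE g /JE //].
by have /J0 /eqP := Jh; rewrite (negPf nzh).
Qed.

Lemma zero_minimal_ideal_infix_rk u y g : T u != 0 -> I (T y) -> T y != 0 -> I g ->
  exists w, [/\ in_two_sided u w, T w = g & (rk delta w <= rk delta y)%N].
Proof.
move=> nzu Iy nzy Ig; case: I_zmin => [[_ _ I_closed] _ _].
have [z nz_yzu] := spanning_mulmx_prime T_span nzy nzu.
have [z' nz_yzuz'y] := spanning_mulmx_prime T_span nz_yzu nzy.
set w0 := y ++ z ++ u ++ z' ++ y.
have Tw0 : T w0 = T y *m T z *m T u *m T z' *m T y by rewrite !T_cat !mulmxA.
have Iw0 : I (T w0).
  by have := I_closed [::] (z ++ u ++ z' ++ y) _ Iy; rewrite T_nil mul1mx -T_cat.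
have nzw0 : T w0 != 0 by rewrite Tw0.
have [x [x' ->]] := zero_minimal_ideal_generated Iw0 nzw0 Ig.
exists (x ++ w0 ++ x'); split.
- by exists (x ++ y ++ z), (z' ++ y ++ x'); rewrite /w0 -!catA.
- by rewrite !T_cat mulmxA.
- by have := rk_infix delta x y (z ++ u ++ z' ++ y ++ x'); rewrite /w0 -!catA.
Qed.

End ZeroMinimalIdeal.

Section WedderburnComponents.
Variables (Sigma : finType) (n : nat) (delta : Sigma -> 'I_n.+1 -> 'I_n.+1).
Variables (C : fieldType) (k : nat) (d : 'I_k -> nat).
Variable phi : forall l : 'I_k, 'M[C]_n -> 'M[C]_(d l).
Local Notation Alg := (gen_alg (fun M => exists u, M = rho delta C u)).
Hypothesis phi_linear : forall l c a b, Alg a -> Alg b ->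
  phi l (c *: a + b) = c *: phi l a + phi l b.
Hypothesis phi_mul : forall l a b, Alg a -> Alg b -> phi l (a *m b) = phi l a *m phi l b.
Hypothesis phi_one : forall l, phi l 1%:M = 1%:M.
Hypothesis phi_onto :
  forall g : forall l, 'M[C]_(d l), exists a, Alg a /\ forall l, phi l a = g l.

Lemma gen_alg_rho u : Alg (rho delta C u).
Proof.
exists [:: (1, [:: rho delta C u])]; split.
  by move=> p /[!inE] /eqP -> M /[!inE] /eqP ->; exists u.
by rewrite big_cons big_nil big_cons big_nil mulmx1 scale1r addr0.
Qed.

Lemma gen_alg0 : Alg 0.
Proof. by exists [::]; rewrite big_nil. Qed.

Lemma phi0 l : phi l 0 = 0.
Proof.
have := phi_linear l 1 gen_alg0 gen_alg0; rewrite !scale1r addr0 => phi0_twice.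
by apply: (addrI (phi l 0)); rewrite addr0 -phi0_twice.
Qed.

Lemma phi_rho_cat l x y :
  phi l (rho delta C (x ++ y)) = phi l (rho delta C x) *m phi l (rho delta C y).
Proof. rewrite rho_cat phi_mul //; exact: gen_alg_rho. Qed.

Lemma phi_rho_nil l : phi l (rho delta C [::]) = 1%:M.
Proof. by rewrite rho_nil phi_one. Qed.

Lemma phi_rho_rk1 l r : rk delta r = 1%N -> phi l (rho delta C r) = 0.
Proof. by move/rho_rk1->; apply: phi0. Qed.

Lemma phi_rho_span l (M : 'M[C]_(d l)) :
  exists s : seq (C * seq Sigma), M = \sum_(p <- s) p.1 *: phi l (rho delta C p.2).
Proof.
have [a [[s [s_rho ->]] phi_a]] := phi_onto (dfwith (fun j => 0) M).
rewrite -(dfwith_in (fun j => 0 : 'M[C]_(d j)) M) -phi_a {phi_a}.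
elim: s s_rho => [|p s IH] s_rho; first by exists [::]; rewrite !big_nil phi0.
have [t phi_s] := IH (fun q sq => s_rho q (@mem_behead _ (p :: s) _ sq)).
have [w pw] := rho_prod (s_rho p (mem_head _ _)).
have alg_s : Alg (\sum_(q <- s) q.1 *: \big[mulmx/1%:M]_(M <- q.2) M).
  by exists s; split=> // q sq; apply: s_rho; rewrite inE sq orbT.
exists ((p.1, w) :: t).
by rewrite !big_cons phi_linear // pw; [congr (_ + _) | apply: gen_alg_rho].
Qed.

End WedderburnComponents.

Section Representation.
Variables (Sigma : finType) (n : nat) (delta : Sigma -> 'I_n.+1 -> 'I_n.+1).
Variables (C : fieldType) (k : nat) (d : 'I_k -> nat).
Variable theta : forall l : 'I_k, seq Sigma -> 'M[C]_(d l).
Hypothesis theta_cat : forall l x y, theta l (x ++ y) = theta l x *m theta l y.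
Hypothesis theta_nil : forall l, theta l [::] = 1%:M.
Hypothesis theta_span : forall l (M : 'M[C]_(d l)),
  exists s : seq (C * seq Sigma), M = \sum_(p <- s) p.1 *: theta l p.2.

Lemma supp_catl x y : supp theta (x ++ y) \subset supp theta x.
Proof.
apply/subsetP => j; rewrite !inE theta_cat.
by apply: contra_neq => ->; apply: mul0mx.
Qed.

Lemma v_minimal_supp_eq0 v u x l : v_minimal theta v u ->
  l \in supp theta u -> theta l x = 0 -> forall j, j \in supp theta u -> theta j x = 0.
Proof.
move=> [[a [b uE]] _ u_min] l_u lx0 j; rewrite inE => nz_ju; apply/eqP/contraT => nz_jx.
have [y nz_juyx] := spanning_mulmx_prime (@theta_span j) nz_ju nz_jx.
case: u_min; exists (u ++ y ++ x); split.
- by exists a, (b ++ y ++ x); rewrite uE -!catA.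
- by apply/set0Pn; exists j; rewrite inE !theta_cat mulmxA.
- apply/properP; split; first exact: supp_catl.
  by exists l => //; rewrite inE !theta_cat lx0 !mulmx0 eqxx.
Qed.

Variables (u : seq Sigma) (l : 'I_k) (I : 'M[C]_(d l) -> Prop).
Hypothesis nz_u : theta l u != 0.
Hypothesis I_zmin : zero_minimal_ideal (theta l) I.

Lemma u_representable r g : theta l r = 0 -> I g -> exists w, u_represents delta theta u g w.
Proof.
move=> r0 Ig; have [-> | nzg] := eqVneq g 0.
  by exists (u ++ r); split; [exists [::], r | rewrite theta_cat r0 mulmx0 | left].
have [y Ty] : exists y, theta l y = g by case: I_zmin => [[_ I_img _] _ _]; apply: I_img.
have Iy : I (theta l y) by rewrite Ty.
have nzy : theta l y != 0 by rewrite Ty.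
have [w0 [u_w0 Tw0 _]] := zero_minimal_ideal_infix_rk delta (theta_cat l) (theta_nil l)
  (@theta_span l) I_zmin nz_u Iy nzy Ig.
pose P r := exists w, [/\ in_two_sided u w, theta l w = g & rk delta w = r].
have [_ [[w [u_w Tw <-]] w_min]] : exists r, is_min P r.
  by apply: ex_is_min; exists (rk delta w0), w0.
by exists w; split=> //; right=> w' u_w' Tw'; apply: w_min; exists w'.
Qed.

Lemma u_represents_rk_le g w y : I g -> g != 0 -> u_represents delta theta u g w ->
  I (theta l y) -> theta l y != 0 -> (rk delta w <= rk delta y)%N.
Proof.
move=> Ig nzg [_ _ [g0 | w_min]] Iy nzy; first by rewrite g0 eqxx in nzg.
have [w' [u_w' Tw' le_w'y]] := zero_minimal_ideal_infix_rk delta (theta_cat l)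
  (theta_nil l) (@theta_span l) I_zmin nz_u Iy nzy Ig.
exact: leq_trans (w_min w' u_w' Tw') le_w'y.
Qed.

Lemma u_represents_Rnk g w : I g -> g != 0 -> u_represents delta theta u g w ->
  Rnk_ideal delta (theta l) I (rk delta w).
Proof.
move=> Ig nzg w_rep; have [_ Tw _] := w_rep.
have le_w := u_represents_rk_le Ig nzg w_rep.
split; last by move=> _ [g' [Ig' nzg' [[y [Ty <-]] _]]]; apply: le_w; rewrite Ty.
exists g; split=> //; split; first by exists w.
by move=> _ [y [Ty <-]]; apply: le_w; rewrite Ty.
Qed.

End Representation.

Theorem mainTheorem5 (R : realType) (Sigma : finType) (n : nat)
  (delta : Sigma -> 'I_n.+1 -> 'I_n.+1)
  (k : nat) (d : 'I_k -> nat)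
  (phi : forall l : 'I_k, 'M[R[i]]_n -> 'M[R[i]]_(d l)) :
  synchronizing delta ->
  wedderburn_decomp (gen_alg (fun M => exists u, M = rho delta R[i] u)) phi ->
  let theta := fun (l : 'I_k) (u : seq Sigma) => phi l (rho delta R[i] u) in
  forall (v u : seq Sigma) (l : 'I_k),
    v_minimal theta v u -> l \in supp theta u ->
    (forall I : 'M[R[i]]_(d l) -> Prop, zero_minimal_ideal (theta l) I ->
       (forall g, I g -> exists w, u_represents delta theta u g w) /\
       (forall g w, I g -> g != 0 -> u_represents delta theta u g w ->
          Rnk_ideal delta (theta l) I (rk delta w))) /\
    (forall x : seq Sigma, (exists l', l' \in supp theta u /\ theta l' x = 0) ->
       forall j, j \in supp theta u -> theta j x = 0).
Proof.
move=> [r rk_r] [_ phi_lin [phi_mul phi_one] phi_onto _] theta v u l u_vmin l_u.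
have theta_cat : forall l x y, theta l (x ++ y) = theta l x *m theta l y.
  exact: phi_rho_cat phi_mul.
have theta_nil : forall l, theta l [::] = 1%:M by exact: phi_rho_nil phi_one.
have theta_span : forall l (M : 'M_(d l)),
    exists s : seq (R[i] * seq Sigma), M = \sum_(p <- s) p.1 *: theta l p.2.
  exact: phi_rho_span phi_lin phi_onto.
have theta_r : theta l r = 0 by exact: (phi_rho_rk1 phi_lin l rk_r).
have nz_u : theta l u != 0 by rewrite inE in l_u.
clearbody theta.
split=> [I I_zmin | x [l' [l'_u l'x0]]].
  split=> [g | g w].
    exact: (u_representable delta theta_cat theta_nil theta_span nz_u I_zmin theta_r).
  exact: (u_represents_Rnk theta_cat theta_nil theta_span nz_u I_zmin).
exact: (v_minimal_supp_eq0 theta_cat theta_span u_vmin l'_u l'x0).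
Qed.
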